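(* On the event described in Lemma 2.4 (namely: (a) whenever $p_j$ and $a_i$ interview each other, $i\le j+8\log n$; and (b) whenever the algorithm considers a proposal to $p_j$, all $p_{j'}$ with $j'<\min(j,n-8\log n)$ are matched), suppose the Adaptive Algorithm is considering the proposal between applicant $a_{i^*}$ and position $p_{j^*}$. Then for every $k\le j^*$, the current matching $\mu$ satisfies $$\big|\{(a_i,p_j)\in\mu : i<k,\ j\ge k\}\big|\le 8\log n.$$
   Context: Logarithms are base 2. Model. Let $A=\{a_1,\dots,a_n\}$ be a set of applicants and $P=\{p_1,\dots,p_n\}$ a set of positions. Each applicant $a_i$ has a publicly known value $u_i\in\mathbb R$ and each position $p_j$ a publicly known value $v_j\in\mathbb R$, indexed so that $u_1\ge u_2\ge\dots\ge u_n$ and $v_1\ge v_2\ge\dots\ge v_n$. The random variables $\epsilon^A_{ij}$, $\epsilon^P_{ji}$ ($i,j\in[n]$) are mutually independent and identically distributed according to a known distribution symmetric about $0$ (mean zero). The utility of $a_i$ for $p_j$ is $v_j+\epsilon^A_{ij}$ and the utility of $p_j$ for $a_i$ is $u_i+\epsilon^P_{ji}$; the values $\epsilon^A_{ij},\epsilon^P_{ji}$ become known only when $a_i$ and $p_j$ interview each other. The observed utility $v^o_{ij}$ of $a_i$ for $p_j$ equals $v_j+\epsilon^A_{ij}$ if $a_i,p_j$ have interviewed and $v_j$ otherwise; $u^o_{ji}$ is defined symmetrically ($u_i+\epsilon^P_{ji}$ or $u_i$). Write $p_j\succ_{a_i}p_{j'}$ iff $v^o_{ij}>v^o_{ij'}$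 and $a_i\succ_{p_j}a_{i'}$ iff $u^o_{ji}>u^o_{ji'}$ (ties broken in favor of the smaller index); every agent prefers any partner to being unmatched. For a matching $\mu$, $\mu(x)$ denotes the partner of $x$ ($\emptyset$ if unmatched). Adaptive Algorithm. Initially all agents are unmatched and $v^o_{ij}=v_j$, $u^o_{ji}=u_i$ for all $i,j$. For an unmatched applicant $a$, let $\beta(a)$ be $a$'s most preferred position (w.r.t. current observed utilities) that has not yet rejected $a$. While some applicant is unmatched: let $j^*$ be the smallest index such that $\beta(a_i)=p_{j^*}$ for some unmatched $a_i$; let $a_{i^*}$ be $p_{j^*}$'s favorite applicant among $\{a_i:\beta(a_i)=p_{j^*},\mu(a_i)=\emptyset\}$. If $a_{i^*},p_{j^*}$ have not interviewed and ($i^*\le j^*$ or $a_{i^*}\succ_{p_{j^*}}\mu(p_{j^*})$), then they interview and $v^o_{i^*j^*},u^o_{j^*i^*}$ are updated. Otherwise: if $\mu(p_{j^*})\succ_{p_{j^*}}a_{i^*}$, then $p_{j^*}$ rejects $a_{i^*}$; else $p_{j^*}$ rejects $\mu(p_{j^*})$ (if nonempty) and $a_{i^*},p_{j^*}$ become matched. When all applicants are matched, output $\mu$. *)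

From HB Require Import structures.
From mathcomp Require Import all_boot all_order all_algebra.
From mathcomp Require Import all_classical all_reals all_analysis.
Set Implicit Arguments. Unset Strict Implicit. Unset Printing Implicit Defensive.
Import Order.TTheory GRing.Theory Num.Theory.
Local Open Scope ring_scope.

Definition log2 {R : realType} (x : R) : R := ln x / ln 2.

(* Applicants and positions are both indexed by 'I_n; the ordinal i stands
   for a_{i+1} (resp. p_{i+1}) of the paper (paper indices are 1-based). *)
Record state (n : nat) := State {
  mu  : {ffun 'I_n -> option 'I_n};      (* mu i = Some j : a_i matched to p_j *)
  itv : {set 'I_n * 'I_n};               (* (i,j) : a_i and p_j have interviewed *)
  rej : {set 'I_n * 'I_n}                (* (i,j) : p_j has rejected a_i *)
}.

Section Algo.
Variables (R : realType) (n : nat).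
Variables (u v : 'I_n -> R) (eA eP : 'I_n -> 'I_n -> R).

Definition vo (s : state n) (i j : 'I_n) : R :=
  v j + (if (i, j) \in itv s then eA i j else 0).
Definition uo (s : state n) (j i : 'I_n) : R :=
  u i + (if (i, j) \in itv s then eP j i else 0).

Definition prefA (s : state n) (i j j' : 'I_n) : bool :=
  (vo s i j' < vo s i j) || ((vo s i j == vo s i j') && (j < j')%N).
Definition prefP (s : state n) (j i i' : 'I_n) : bool :=
  (uo s j i' < uo s j i) || ((uo s j i == uo s j i') && (i < i')%N).

Definition beta (s : state n) (i : 'I_n) : option 'I_n :=
  [pick j | ((i, j) \notin rej s) &&
     [forall j', (((i, j') \notin rej s) && (j' != j)) ==> prefA s i j j']].

Definition muP (s : state n) (j : 'I_n) : option 'I_n :=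
  [pick i | mu s i == Some j].

Definition proposers (s : state n) (j : 'I_n) : {set 'I_n} :=
  [set i | (mu s i == None) && (beta s i == Some j)].

Definition jstar (s : state n) : option 'I_n :=
  [pick j | (proposers s j != finset.set0) &&
     [forall j' : 'I_n, (j' < j)%N ==> (proposers s j' == finset.set0)]].

Definition istar (s : state n) (j : 'I_n) : option 'I_n :=
  [pick i | (i \in proposers s j) &&
     [forall i', ((i' \in proposers s j) && (i' != i)) ==> prefP s j i i']].

Definition betterP (s : state n) (j i : 'I_n) (o : option 'I_n) : bool :=
  if o is Some i' then prefP s j i i' else true.

Definition step (s : state n) : state n :=
  match jstar s with
  | None => s
  | Some j =>
    match istar s j with
    | None => s
    | Some i =>
      if ((i, j) \notin itv s) && ((i <= j)%N || betterP s j i (muP s j)) then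
        State (mu s) ((i, j) |: itv s) (rej s)
      else match muP s j with
        | Some i' =>
          if prefP s j i' i then State (mu s) (itv s) ((i, j) |: rej s)
          else State [ffun x => if x == i then Some j
                                else if x == i' then None else mu s x]
                     (itv s) ((i', j) |: rej s)
        | None => State [ffun x => if x == i then Some j else mu s x]
                        (itv s) (rej s)
        end
    end
  end.

Definition init : state n := State [ffun _ => None] finset.set0 finset.set0.

Definition run (t : nat) : state n := iter t step init.

Definition considers (t : nat) (i j : 'I_n) : Prop :=
  jstar (run t) = Some j /\ istar (run t) j = Some i.

(* The event of Lemma 2.4 (1-based indices i.+1, j.+1). *)
Definition event_L24 : Prop :=
  (forall t (i j : 'I_n), (i, j) \in itv (run t) ->
      (i.+1)%:R <= (j.+1)%:R + 8 * log2 (n%:R : R)) /\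
  (forall t (i j : 'I_n), considers t i j ->
     forall j' : 'I_n, (j'.+1)%:R < Num.min ((j.+1)%:R) (n%:R - 8 * log2 (n%:R : R)) ->
     exists i' : 'I_n, mu (run t) i' = Some j').

End Algo.

(** Every position [p_j] with [j + 8 log n < k] is matched, by part (b) of
    the event, and by part (a) its partner [a_i] has [i <= j + 8 log n < k].
    So more than [k - 1 - 8 log n] of the [k - 1] applicants [a_i], [i < k],
    are matched below the cut [k], and only the others can be matched across
    it. *)
From HB Require Import structures.
From mathcomp Require Import all_boot all_order all_algebra.
From mathcomp Require Import all_classical all_reals all_analysis.
From mathcomp Require Import lra.
Set Implicit Arguments. Unset Strict Implicit. Unset Printing Implicit Defensive.
Import Order.TTheory GRing.Theory Num.Theory.
Local Open Scope ring_scope.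

Lemma card_ord_lt n m : #|[set j : 'I_n | (j < m)%N]| = minn m n.
Proof.
have le_mn : (minn m n <= n)%N := geq_minr m n.
have widen_inj : injective (widen_ord le_mn).
  by move=> x y /(congr1 val) eq_xy; apply: val_inj.
rewrite -[RHS]card_ord -cardsT -(card_imset _ widen_inj).
apply: eq_card => j; rewrite inE; apply/idP/imsetP => [lt_jm|[i _ ->]].
  have lt_j : (j < minn m n)%N by rewrite leq_min lt_jm ltn_ord.
  by exists (Ordinal lt_j) => //; apply: val_inj.
by rewrite /= (leq_trans (ltn_ord i)) // geq_minl.
Qed.

Lemma card_cut_crossing (n K : nat) (m : 'I_n -> option 'I_n) (G : {set 'I_n}) :
  (forall j, j \in G -> (j < K)%N) ->
  (forall j, j \in G -> exists2 i : 'I_n, (i < K)%N & m i = Some j) ->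
  (#|[set p : 'I_n * 'I_n | (m p.1 == Some p.2) && (p.1 < K)%N && (K <= p.2)%N]|
     + #|G| <= K)%N.
Proof.
move=> G_low G_taken.
set S := [set p | _].
pose A_in := [set i : 'I_n | (i < K)%N && [exists j in G, m i == Some j]].
pose A_out := [set i : 'I_n | (i < K)%N && [exists j, (m i == Some j) && (K <= j)%N]].
have le_S : (#|S| <= #|A_out|)%N.
  have fst_inj : {in S &, injective fst}.
    move=> [i j] [i' j']; rewrite !inE /= => /andP[/andP[/eqP mi _] _].
    by move=> /andP[/andP[/eqP mi' _] _] /= eq_i; move: mi'; rewrite -eq_i mi => -[->].
  rewrite -(card_in_imset fst_inj); apply/subset_leq_card/fintype.subsetP.
  move=> p /imsetP[[i j]]; rewrite inE /= => /andP[/andP[mi lt_iK] le_Kj] ->.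
  by rewrite inE lt_iK; apply/existsP; exists j; rewrite mi.
have le_G : (#|G| <= #|A_in|)%N.
  rewrite -(card_imset G (@Some_inj _)).
  apply: leq_trans (leq_imset_card m A_in); apply/subset_leq_card/fintype.subsetP.
  move=> o /imsetP[j Gj ->]; have [i lt_iK mi] := G_taken j Gj.
  apply/imsetP; exists i; last by rewrite mi.
  by rewrite inE lt_iK /=; apply/existsP; exists j; rewrite Gj mi eqxx.
have disj : [disjoint A_in & A_out].
  apply/pred0P => i /=; apply/negbTE; rewrite !inE; apply/negP.
  case/and3P=> /andP[_ /existsP[j /andP[Gj /eqP mi]]] _ /existsP[j'].
  by rewrite mi => /andP[/eqP[<-]]; rewrite leqNgt G_low.
have sub_low : A_in :|: A_out \subset [set i : 'I_n | (i < K)%N].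
  by apply/fintype.subsetP => i; rewrite !inE => /orP[] /andP[].
rewrite addnC; apply: leq_trans (leq_add le_G le_S) _.
have [_] := leq_card_setU A_in A_out; rewrite disj => /eqP <-.
by apply: leq_trans (subset_leq_card sub_low) _; rewrite card_ord_lt geq_minl.
Qed.

Lemma card_shifted_prefix (R : realFieldType) (n K : nat) (L : R) :
  0 <= L -> (K <= n)%N -> K%:R <= #|[set j : 'I_n | j%:R + L < K%:R]|%:R + L.
Proof.
move=> L_ge0 le_Kn; set G := [set j | _]; set g := #|G|.
rewrite leNgt; apply/negP => lt_gK.
have lt_gn : (g < n)%N by apply: leq_trans le_Kn; rewrite -(ltr_nat R); lra.
suff : (g.+1 <= g)%N by rewrite ltnn.
rewrite -{1}(minn_idPl lt_gn) -card_ord_lt; apply/subset_leq_card/fintype.subsetP.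
move=> j; rewrite !inE ltnS -(ler_nat R) => le_jg; lra.
Qed.

Section Adaptive.
Variables (R : realType) (n : nat) (u v : 'I_n -> R) (eA eP : 'I_n -> 'I_n -> R).

Lemma prefP_total (s : state n) (j i i' : 'I_n) :
  i != i' -> prefP u eP s j i i' || prefP u eP s j i' i.
Proof.
move=> ne_ii'; rewrite /prefP.
by case: (ltgtP (uo u eP s j i') (uo u eP s j i)) => //= _; rewrite -neq_ltn.
Qed.

Lemma istar_proposer (s : state n) (i j : 'I_n) :
  istar u v eA eP s j = Some i -> i \in proposers v eA s j.
Proof. by rewrite /istar; case: pickP => // x /andP[? _] [<-]. Qed.

Lemma muP_matched (s : state n) (i j : 'I_n) : muP s j = Some i -> mu s i = Some j.
Proof. by rewrite /muP; case: pickP => // x /eqP mx [<-]. Qed.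

(** A position only accepts an applicant after interviewing it: an applicant
    it has not interviewed is first interviewed unless it loses to the current
    partner, and [prefP] is total. *)
Lemma step_matched_interviewed (s : state n) :
  (forall i j, mu s i = Some j -> (i, j) \in itv s) ->
  forall i j, mu (step u v eA eP s) i = Some j -> (i, j) \in itv (step u v eA eP s).
Proof.
move=> matched_itv i j; rewrite /step.
case: (jstar _ _ s) => [j0|]; last exact: matched_itv.
case E_i0: (istar _ _ _ _ s j0) => [i0|]; last exact: matched_itv.
have /andP[/eqP i0_free _] : (mu s i0 == None) && (beta v eA s i0 == Some j0).
  by move: (istar_proposer E_i0); rewrite inE.
case: ifP => [_ /matched_itv|no_interview]; first by rewrite in_setU1 orbC => ->.
have [i0_itv | i0_not_itv] := boolP ((i0, j0) \in itv s); last first.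
  move: no_interview; rewrite i0_not_itv /= => /negbT; rewrite negb_or.
  case/andP=> _; case E_i1: (muP s j0) => [i1|] //= not_better.
  have ne_i01 : i0 != i1 by apply: contra_eq_neq i0_free => ->; rewrite (muP_matched E_i1).
  have := prefP_total s j0 ne_i01; rewrite (negbTE not_better) /= => -> /=.
  exact: matched_itv.
case: (muP s j0) => [i1|].
  case: ifP => _; first exact: matched_itv.
  rewrite /= ffunE; case: eqP => [-> [<-] //|_].
  by case: eqP => // _ /matched_itv.
by rewrite /= ffunE; case: eqP => [-> [<-] //|_ /matched_itv].
Qed.

Lemma run_matched_interviewed t (i j : 'I_n) :
  mu (run u v eA eP t) i = Some j -> (i, j) \in itv (run u v eA eP t).
Proof.
elim: t i j => [|t IH] i j; first by rewrite /run /= ffunE.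
by rewrite /run iterS; apply: step_matched_interviewed.
Qed.

End Adaptive.

Theorem claim2p6 (R : realType) (n : nat) (u v : 'I_n -> R)
  (eA eP : 'I_n -> 'I_n -> R)
  (hu : forall i i' : 'I_n, (i <= i')%N -> u i' <= u i)
  (hv : forall j j' : 'I_n, (j <= j')%N -> v j' <= v j) :
  event_L24 u v eA eP ->
  forall (t : nat) (istr jstr : 'I_n), considers u v eA eP t istr jstr ->
  forall k : nat, (k <= jstr.+1)%N ->
    (#|[set p : 'I_n * 'I_n |
         (mu (run u v eA eP t) p.1 == Some p.2) &&
         (p.1.+1 < k)%N && (k <= p.2.+1)%N]|)%:R
      <= 8 * log2 (n%:R : R).
Proof.
move=> [interview_near matched_below] t istr jstr cons.
set s := run u v eA eP t; set L := 8 * log2 (n%:R : R).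
have L_ge0 : 0 <= L.
  have n_ge1 : (1 <= n)%N := leq_ltn_trans (leq0n _) (ltn_ord jstr).
  by rewrite mulr_ge0 // divr_ge0 ?ln_ge0 ?ler1n // ltW // ln_gt0 // ltr1n.
case=> [_|k]; first by rewrite eq_card0 // => p; rewrite !inE ltn0 andbF.
rewrite ltnS => le_kj; have lt_kn : (k < n)%N := leq_ltn_trans le_kj (ltn_ord jstr).
set G := [set j : 'I_n | j%:R + L < k%:R].
have G_low j : j \in G -> (j < k)%N.
  by rewrite inE -(ltr_nat R) => ?; lra.
have G_taken j : j \in G -> exists2 i : 'I_n, (i < k)%N & mu s i = Some j.
  move=> Gj; have lt_jk := G_low j Gj; move: Gj; rewrite inE => jL_lt_k.
  have lt_j_min : (j.+1)%:R < Num.min (jstr.+1)%:R (n%:R - L) :> R.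
    rewrite lt_min ltr_nat !ltnS (leq_trans lt_jk le_kj) /=.
    have : (k.+1)%:R <= n%:R :> R by rewrite ler_nat.
    by rewrite -!natr1 => ?; lra.
  have [i mi] := matched_below t istr jstr cons j lt_j_min.
  have := interview_near t i j (run_matched_interviewed mi); rewrite -/L -!natr1 => ?.
  by exists i; rewrite // -(ltr_nat R); lra.
have cut : (#|[set p : 'I_n * 'I_n | (mu s p.1 == Some p.2) && (p.1.+1 < k.+1)%N
                                     && (k.+1 <= p.2.+1)%N]| + #|G| <= k)%N.
  exact: card_cut_crossing G_low G_taken.
have := card_shifted_prefix L_ge0 (ltnW lt_kn); move: cut.
by rewrite -(ler_nat R) natrD => ? ?; lra.
Qed.
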